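(* Let $f\in C^2(\mathbb T,\mathbb R)$ be non-degenerate. Then $$\mathcal H^0(\{f=0\})=-\frac12\int_0^{2\pi}\big(f''(x)f(x)-f'(x)^2\big)\frac{|f(x)|}{\eta_f(x)^3}\,dx .$$
   Context: $\mathbb T=\mathbb R/2\pi\mathbb Z$, functions on $\mathbb T$ are identified with $2\pi$-periodic functions on $\mathbb R$, and $\mathcal H^0(\{f=0\})$ is the number of zeros of $f$ in one period $[0,2\pi)$. Set $\eta_f(x):=\sqrt{f(x)^2+f'(x)^2}$; $f$ is non-degenerate if $\min_x\eta_f(x)>0$. *)

From Stdlib Require Import Reals List.
From Coquelicot Require Import Coquelicot.
Open Scope R_scope.

(* f is 2*PI-periodic (a function on the torus T = R / 2 PI Z). *)
Definition periodic_2pi (f : R -> R) : Prop := forall x, f (x + 2 * PI) = f x.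

Definition C2 (f : R -> R) : Prop :=
  (forall x, ex_derive f x) /\
  (forall x, ex_derive (Derive f) x) /\
  (forall x, continuous (Derive (Derive f)) x).

Definition eta (f : R -> R) (x : R) : R := sqrt (f x ^ 2 + Derive f x ^ 2).

(* non-degenerate: min_x eta_f(x) > 0 (the minimum exists by continuity
   and periodicity; we state it as a uniform positive lower bound) *)
Definition nondegenerate (f : R -> R) : Prop :=
  exists c, 0 < c /\ forall x, c <= eta f x.

Definition kac_integrand (f : R -> R) (x : R) : R :=
  (Derive (Derive f) x * f x - Derive f x ^ 2) * Rabs (f x) / eta f x ^ 3.

(* H^0({f = 0}) = n : the zero set of f in one period [0, 2 PI) is finite
   with exactly n elements. *)
Definition zero_count_is (f : R -> R) (n : nat) : Prop :=
  exists l : list R, NoDup l /\ length l = n /\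
    (forall x, In x l <-> (0 <= x < 2 * PI /\ f x = 0)).

From Stdlib Require Import Reals List Lra Lia Classical.
From Coquelicot Require Import Coquelicot.
Open Scope R_scope.

(* With h = f'/eta one computes h' = f (f'' f - f'^2) / eta^3, so the integrand is
   sign(f) h'.  Between consecutive zeros the integral is therefore the increment of
   G = sign(f) h.  Non-degeneracy makes every zero z simple, with h(z) = sign f'(z),
   so G jumps from -1 to +1 across z.  Summing over a period, the integral equals
   G(2 PI) - G(0) - 2 #zeros = -2 #zeros by periodicity. *)

Lemma sign_choice x : x <> 0 -> exists s, (s = 1 \/ s = -1) /\ 0 < s * x.
Proof.
intros Hx; destruct (Rlt_or_le 0 x).
- exists 1; split; [left |]; lra.
- exists (-1); split; [right |]; lra.
Qed.

Lemma strictly_increasing_of_Derive_pos (g : R -> R) a b :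
  (forall x, a <= x <= b -> ex_derive g x) ->
  (forall x, a <= x <= b -> 0 < Derive g x) ->
  forall u v, a <= u -> u < v -> v <= b -> g u < g v.
Proof.
intros Hg Hpos u v Hu Huv Hv.
destruct (MVT_gen g u v (Derive g)) as [xi [Hxi Hmvt]];
  rewrite ?Rmin_left, ?Rmax_right in * by lra.
- intros x Hx; apply Derive_correct, Hg; lra.
- intros x Hx; apply continuity_pt_filterlim, (ex_derive_continuous g), Hg; lra.
- assert (0 < Derive g xi * (v - u)) by (apply Rmult_lt_0_compat; [apply Hpos |]; lra).
  lra.
Qed.

Lemma root_free_constant_sign (g : R -> R) a b :
  (forall x, continuous g x) -> (forall x, a <= x <= b -> g x <> 0) ->
  forall x, a <= x <= b -> 0 < g a * g x.
Proof.
intros Hg Hnz x Hx.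
destruct (Rlt_or_le 0 (g a * g x)) as [| Hle]; auto; exfalso.
assert (Ha := Hnz a ltac:(lra)).
destruct (IVT_gen g a x 0) as [y [Hy Hgy]].
- intros y; apply continuity_pt_filterlim, Hg.
- unfold Rmin, Rmax; destruct (Rle_dec (g a) (g x)); split; nra.
- rewrite Rmin_left, Rmax_right in Hy by lra.
  apply (Hnz y); [lra | exact Hgy].
Qed.

Lemma interval_subdivision_ind (P : R -> R -> Prop) lo hi d :
  0 < d -> lo <= hi ->
  (forall a b c, lo <= a <= b -> b <= c <= hi -> P a b -> P b c -> P a c) ->
  (forall a b, lo <= a <= b -> b <= hi -> b - a <= d -> P a b) ->
  P lo hi.
Proof.
intros Hd Hlh Htrans Hshort.
destruct (INR_unbounded ((hi - lo) / d)) as [N HN].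
assert (HN0 : 0 < INR N).
{ assert (0 <= (hi - lo) / d) by (apply Rdiv_le_0_compat; lra); lra. }
set (step := (hi - lo) / INR N).
assert (Hstep : 0 <= step) by (apply Rdiv_le_0_compat; lra).
assert (HNstep : INR N * step = hi - lo) by (unfold step; field; lra).
assert (Hsd : step <= d).
{ apply Rmult_le_reg_l with (INR N); auto.
  apply Rmult_lt_compat_r with (r := d) in HN; auto.
  unfold Rdiv in HN; rewrite Rmult_assoc, Rinv_l in HN; lra. }
assert (Hgrid : forall m, (m <= N)%nat -> P lo (lo + INR m * step)).
{ induction m as [| m IH]; intros Hm.
  - rewrite Rmult_0_l, Rplus_0_r; apply Hshort; lra.
  - assert (Hm0 : 0 <= INR m * step) by (apply Rmult_le_pos; [apply pos_INR | lra]).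
    assert (HmN : INR (S m) * step <= INR N * step)
      by (apply Rmult_le_compat_r; [lra | apply le_INR; lia]).
    rewrite S_INR in *.
    apply (Htrans _ (lo + INR m * step)); [lra | lra | apply IH; lia |].
    apply Hshort; lra. }
replace hi with (lo + INR N * step) by lra.
apply Hgrid; lia.
Qed.

Definition unit_slope (f : R -> R) (x : R) : R := Derive f x / eta f x.

Definition unit_slope_deriv (f : R -> R) (x : R) : R :=
  f x * (Derive (Derive f) x * f x - Derive f x ^ 2) / eta f x ^ 3.

(* This is G; its value -1 at a zero is the left limit of sign(f) f'/eta there (the
   zero being simple), so G jumps by +2 across each zero. *)
Definition signed_slope (f : R -> R) (x : R) : R :=
  if Rlt_dec 0 (f x) then unit_slope f x
  else if Rlt_dec (f x) 0 then - unit_slope f x else -1.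

Definition zero_list (f : R -> R) (a b : R) (l : list R) : Prop :=
  NoDup l /\ forall x, In x l <-> a <= x < b /\ f x = 0.

Definition kac_identity (f : R -> R) (a b : R) : Prop :=
  exists l, zero_list f a b l /\
    is_RInt (kac_integrand f) a b
      (signed_slope f b - signed_slope f a - 2 * INR (length l)).

Lemma eta_root f x : f x = 0 -> eta f x = Rabs (Derive f x).
Proof.
intros Hx; unfold eta; rewrite Hx, <- sqrt_Rsqr_abs; f_equal; unfold Rsqr; ring.
Qed.

Lemma unit_slope_root f s z :
  s = 1 \/ s = -1 -> f z = 0 -> 0 < s * Derive f z -> s * unit_slope f z = 1.
Proof.
intros Hs Hz Hsz; unfold unit_slope; rewrite eta_root by exact Hz.
destruct Hs as [-> | ->]; [rewrite Rabs_pos_eq | rewrite Rabs_left]; try field; lra.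
Qed.

Lemma is_derive_unit_slope f x :
  ex_derive f x -> ex_derive (Derive f) x -> 0 < eta f x ->
  is_derive (unit_slope f) x (unit_slope_deriv f x).
Proof.
unfold unit_slope, unit_slope_deriv, eta; intros Hf HDf Heta.
assert (Hsq : 0 < f x ^ 2 + Derive f x ^ 2)
  by (apply sqrt_lt_0_alt; rewrite sqrt_0; exact Heta).
auto_derive;
  replace (f x * (f x * 1) + Derive f x * (Derive f x * 1))
    with (f x ^ 2 + Derive f x ^ 2) by ring.
- repeat split; auto; lra.
- assert (HS : sqrt (f x ^ 2 + Derive f x ^ 2) ^ 2 = f x ^ 2 + Derive f x ^ 2)
    by (rewrite <- Rsqr_pow2; apply Rsqr_sqrt; lra).
  change (fun y => f y) with f; change (fun y => Derive f y) with (Derive f).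
  set (S := sqrt _) in *.
  field_simplify; [rewrite HS; field |..]; lra.
Qed.

Lemma signed_slope_pos f s x :
  s = 1 \/ s = -1 -> 0 < s * f x -> signed_slope f x = s * unit_slope f x.
Proof.
unfold signed_slope; intros [-> | ->] Hx;
  destruct (Rlt_dec 0 (f x)); destruct (Rlt_dec (f x) 0); lra.
Qed.

Lemma signed_slope_neg f s x :
  s = 1 \/ s = -1 -> s * f x < 0 -> signed_slope f x = - (s * unit_slope f x).
Proof.
unfold signed_slope; intros [-> | ->] Hx;
  destruct (Rlt_dec 0 (f x)); destruct (Rlt_dec (f x) 0); lra.
Qed.

Lemma signed_slope_root f x : f x = 0 -> signed_slope f x = -1.
Proof.
unfold signed_slope; intros Hx; destruct (Rlt_dec 0 (f x)); destruct (Rlt_dec (f x) 0); lra.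
Qed.

Lemma kac_identity_refl f a : kac_identity f a a.
Proof.
exists nil; split; [split |].
- constructor.
- intros x; simpl; lra.
- replace (signed_slope f a - signed_slope f a - 2 * INR (length nil))
    with (@zero R_NormedModule)
    by (unfold zero; simpl; ring).
  apply is_RInt_point.
Qed.

Lemma kac_identity_Chasles f a b c :
  a <= b <= c -> kac_identity f a b -> kac_identity f b c -> kac_identity f a c.
Proof.
intros Hb [l1 [[Hnd1 Hin1] I1]] [l2 [[Hnd2 Hin2] I2]].
exists (l1 ++ l2); split; [split |].
- apply NoDup_app; auto.
  intros x H1 H2; apply Hin1 in H1; apply Hin2 in H2; lra.
- intros x; rewrite in_app_iff, Hin1, Hin2.
  destruct (Rlt_or_le x b); intuition lra.
- rewrite length_app, plus_INR.
  replace (signed_slope f c - signed_slope f a - 2 * (INR (length l1) + INR (length l2)))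
    with (plus (signed_slope f b - signed_slope f a - 2 * INR (length l1))
               (signed_slope f c - signed_slope f b - 2 * INR (length l2)))
    by (unfold plus; simpl; ring).
  exact (is_RInt_Chasles _ _ _ _ _ _ I1 I2).
Qed.

Lemma Derive_periodic f :
  periodic_2pi f -> (forall x, ex_derive f x) ->
  forall x, Derive f (x + 2 * PI) = Derive f x.
Proof.
intros Hper Hf x.
transitivity (Derive (fun t => f (t + 2 * PI)) x); [| apply Derive_ext, Hper].
rewrite (Derive_comp f (fun t => t + 2 * PI)); [| auto | auto_derive; auto].
replace (Derive (fun t => t + 2 * PI) x) with 1;
  [ring | symmetry; apply is_derive_unique; auto_derive; auto].
Qed.

Lemma signed_slope_periodic f :
  periodic_2pi f -> (forall x, ex_derive f x) -> signed_slope f (2 * PI) = signed_slope f 0.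
Proof.
intros Hper Hf.
assert (Hval := Hper 0); assert (Hder := Derive_periodic f Hper Hf 0).
rewrite Rplus_0_l in Hval, Hder.
unfold signed_slope, unit_slope, eta; rewrite Hval, Hder; reflexivity.
Qed.

Section KacRice.

Variable f : R -> R.
Hypothesis f_derivable : forall x, ex_derive f x.
Hypothesis Df_derivable : forall x, ex_derive (Derive f) x.
Hypothesis DDf_continuous : forall x, continuous (Derive (Derive f)) x.
Hypothesis f_nondegenerate : nondegenerate f.

Lemma eta_pos x : 0 < eta f x.
Proof. destruct f_nondegenerate as [c [Hc Heta]]; specialize (Heta x); lra. Qed.

Lemma Derive_root_neq0 z : f z = 0 -> Derive f z <> 0.
Proof.
intros Hz HDz; assert (H := eta_pos z).
rewrite eta_root, HDz, Rabs_R0 in H; lra.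
Qed.

Lemma unit_slope_deriv_continuous x : continuous (unit_slope_deriv f) x.
Proof.
assert (Hf : forall y, continuity_pt f y)
  by (intros y; apply continuity_pt_filterlim, (ex_derive_continuous f), f_derivable).
assert (HDf : forall y, continuity_pt (Derive f) y)
  by (intros y; apply continuity_pt_filterlim, (ex_derive_continuous (Derive f)),
        Df_derivable).
assert (HDDf : forall y, continuity_pt (Derive (Derive f)) y)
  by (intros y; apply continuity_pt_filterlim, DDf_continuous).
apply continuity_pt_filterlim.
assert (H := eta_pos x).
unfold unit_slope_deriv, eta in *; reg; auto; [nra | apply pow_nonzero; lra].
Qed.

Lemma is_RInt_kac_integrand_of_sign s a b :
  s = 1 \/ s = -1 -> a <= b -> (forall x, a <= x <= b -> 0 <= s * f x) ->
  is_RInt (kac_integrand f) a b (s * (unit_slope f b - unit_slope f a)).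
Proof.
intros Hs Hab Hsign.
assert (Hint : is_RInt (fun x => s * unit_slope_deriv f x) a b
                 (minus (s * unit_slope f b) (s * unit_slope f a))).
{ apply (is_RInt_derive (fun x => s * unit_slope f x)).
  - intros x _; apply is_derive_scal, is_derive_unit_slope; auto using eta_pos.
  - intros x _.
    apply (continuous_scal_r s (unit_slope_deriv f)), unit_slope_deriv_continuous. }
replace (s * (unit_slope f b - unit_slope f a))
  with (minus (s * unit_slope f b) (s * unit_slope f a))
  by (unfold minus, plus, opp; simpl; ring).
apply is_RInt_ext with (2 := Hint).
intros x Hx; rewrite Rmin_left, Rmax_right in Hx by lra.
assert (Habs : Rabs (f x) = s * f x).
{ specialize (Hsign x ltac:(lra)).
  destruct Hs as [-> | ->]; [rewrite Rabs_pos_eq | rewrite Rabs_left1]; lra. }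
unfold kac_integrand, unit_slope_deriv; rewrite Habs; simpl; unfold Rdiv; ring.
Qed.

Lemma kac_identity_root_free a b :
  a <= b -> (forall x, a <= x <= b -> f x <> 0) -> kac_identity f a b.
Proof.
intros Hab Hnz.
destruct (sign_choice (f a) (Hnz a ltac:(lra))) as [s [Hs Hsa]].
assert (Hsign : forall x, a <= x <= b -> 0 < s * f x).
{ intros x Hx.
  assert (H := root_free_constant_sign f a b
                 (fun y => ex_derive_continuous f y (f_derivable y)) Hnz x Hx).
  destruct Hs as [-> | ->]; nra. }
exists nil; split; [split |].
- constructor.
- intros x; simpl; split; [tauto |].
  intros [Hx Hfx]; apply (Hnz x); [lra | exact Hfx].
- simpl INR; rewrite Rmult_0_r, Rminus_0_r.
  rewrite (signed_slope_pos f s b), (signed_slope_pos f s a); auto; [| apply Hsign; lra].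
  replace (s * unit_slope f b - s * unit_slope f a)
    with (s * (unit_slope f b - unit_slope f a)) by ring.
  apply is_RInt_kac_integrand_of_sign; auto.
  intros x Hx; specialize (Hsign x Hx); lra.
Qed.

Lemma kac_identity_ending_at_root a z s :
  s = 1 \/ s = -1 -> a <= z -> f z = 0 -> 0 < s * Derive f z ->
  (forall x, a <= x < z -> s * f x < 0) -> kac_identity f a z.
Proof.
intros Hs Haz Hfz HDz Hbelow.
assert (Hslope_z := unit_slope_root f s z Hs Hfz HDz).
exists nil; split; [split |].
- constructor.
- intros x; simpl; split; [tauto |].
  intros [Hx Hfx]; assert (H := Hbelow x Hx); rewrite Hfx in H; lra.
- assert (Hslope_a : signed_slope f a = - (s * unit_slope f a)).
  { destruct (Rle_lt_or_eq_dec a z) as [Hlt | ->]; [lra | |].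
    - apply signed_slope_neg; auto; apply Hbelow; lra.
    - rewrite signed_slope_root, Hslope_z by exact Hfz; ring. }
  rewrite signed_slope_root, Hslope_a by exact Hfz.
  replace (-1 - - (s * unit_slope f a) - 2 * INR (length nil))
    with (- s * (unit_slope f z - unit_slope f a)) by (simpl; nra).
  apply is_RInt_kac_integrand_of_sign; [destruct Hs as [-> | ->]; lra | lra |].
  intros x Hx; destruct (Req_dec x z) as [-> | Hne]; [rewrite Hfz; lra |].
  assert (H := Hbelow x ltac:(lra)); lra.
Qed.

Lemma kac_identity_starting_at_root z b s :
  s = 1 \/ s = -1 -> z < b -> f z = 0 -> 0 < s * Derive f z ->
  (forall x, z < x <= b -> 0 < s * f x) -> kac_identity f z b.
Proof.
intros Hs Hzb Hfz HDz Habove.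
assert (Hslope_z := unit_slope_root f s z Hs Hfz HDz).
exists (z :: nil); split; [split |].
- repeat constructor; simpl; tauto.
- intros x; simpl; split.
  + intros [<- | []]; split; [lra | exact Hfz].
  + intros [Hx Hfx]; left; destruct (Req_dec z x) as [| Hne]; auto.
    assert (H := Habove x ltac:(lra)); rewrite Hfx in H; lra.
- rewrite (signed_slope_pos f s b Hs (Habove b ltac:(lra))), signed_slope_root by exact Hfz.
  replace (s * unit_slope f b - -1 - 2 * INR (length (z :: nil)))
    with (s * (unit_slope f b - unit_slope f z)) by (simpl; nra).
  apply is_RInt_kac_integrand_of_sign; [auto | lra |].
  intros x Hx; destruct (Req_dec x z) as [-> | Hne]; [rewrite Hfz; lra |].
  assert (H := Habove x ltac:(lra)); lra.
Qed.

Lemma root_crossing a b z s :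
  (forall x, a <= x <= b -> 0 < s * Derive f x) -> a <= z <= b -> f z = 0 ->
  forall x, a <= x <= b -> (x < z -> s * f x < 0) /\ (z < x -> 0 < s * f x).
Proof.
intros HDf Hz Hfz x Hx.
assert (Hincr : forall u v, a <= u -> u < v -> v <= b -> s * f u < s * f v).
{ apply (strictly_increasing_of_Derive_pos (fun y => s * f y)).
  - intros y _; apply ex_derive_scal, f_derivable.
  - intros y Hy; rewrite Derive_scal; auto. }
split; intros Hxz.
- assert (H := Hincr x z ltac:(lra) Hxz ltac:(lra)); rewrite Hfz in H; lra.
- assert (H := Hincr z x ltac:(lra) Hxz ltac:(lra)); rewrite Hfz in H; lra.
Qed.

Lemma kac_identity_local a b :
  a <= b ->
  (forall z x, a <= z <= b -> a <= x <= b -> f z = 0 -> 0 < Derive f x * Derive f z) ->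
  kac_identity f a b.
Proof.
intros Hab Hsign.
destruct (classic (exists z, a <= z <= b /\ f z = 0)) as [[z [Hz Hfz]] | Hnone].
- destruct (sign_choice (Derive f z) (Derive_root_neq0 z Hfz)) as [s [Hs Hsz]].
  assert (HDf : forall x, a <= x <= b -> 0 < s * Derive f x).
  { intros x Hx; specialize (Hsign z x Hz Hx Hfz); destruct Hs as [-> | ->]; nra. }
  assert (Hcross := root_crossing a b z s HDf Hz Hfz).
  apply (kac_identity_Chasles f a z b); [lra | |].
  + apply (kac_identity_ending_at_root a z s); auto; [lra |].
    intros x Hx; apply Hcross; lra.
  + destruct (Rle_lt_or_eq_dec z b) as [Hzb | <-]; [lra | | apply kac_identity_refl].
    apply (kac_identity_starting_at_root z b s); auto.
    intros x Hx; apply Hcross; lra.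
- apply kac_identity_root_free; auto.
  intros x Hx Hfx; apply Hnone; exists x; auto.
Qed.

(* Near a zero z, f' stays within c/2 of f'(z), where |f'(z)| = eta(z) >= c:
   d = c / (2 (M + 1)) with M a bound for |f''| on [lo, hi]. *)
Lemma Derive_sign_near_root lo hi : lo <= hi ->
  exists d, 0 < d /\ forall z x, lo <= z <= hi -> lo <= x <= hi -> f z = 0 ->
    Rabs (x - z) <= d -> 0 < Derive f x * Derive f z.
Proof.
intros Hlh.
destruct f_nondegenerate as [c [Hc Heta]].
destruct (continuity_ab_maj (fun x => Rabs (Derive (Derive f) x)) lo hi Hlh) as [xM [HM _]].
{ intros x _; apply continuity_pt_filterlim, continuous_Rabs_comp, DDf_continuous. }
set (M := Rabs (Derive (Derive f) xM)) in *.
assert (HM0 : 0 <= M) by apply Rabs_pos.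
exists (c / (2 * (M + 1))); split; [apply Rdiv_lt_0_compat; lra |].
intros z x Hz Hx Hfz Hxz.
assert (HDz : c <= Rabs (Derive f z)) by (rewrite <- eta_root by exact Hfz; apply Heta).
destruct (MVT_gen (Derive f) z x (Derive (Derive f))) as [xi [Hxi Hmvt]].
- intros y _; apply Derive_correct, Df_derivable.
- intros y _.
  apply continuity_pt_filterlim, (ex_derive_continuous (Derive f)), Df_derivable.
- assert (Hxi_bound : Rabs (Derive (Derive f) xi) <= M).
  { apply HM; unfold Rmin, Rmax in Hxi; destruct (Rle_dec z x); lra. }
  assert (Hclose : Rabs (Derive f x - Derive f z) <= c / 2 - c / (2 * (M + 1))).
  { rewrite Hmvt, Rabs_mult.
    replace (c / 2 - c / (2 * (M + 1))) with (M * (c / (2 * (M + 1)))) by (field; lra).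
    apply Rmult_le_compat; auto using Rabs_pos. }
  assert (0 < c / (2 * (M + 1))) by (apply Rdiv_lt_0_compat; lra).
  apply Rabs_le_between in Hclose.
  destruct (Rle_or_lt 0 (Derive f z)) as [Hpos | Hneg];
    [rewrite Rabs_pos_eq in HDz | rewrite Rabs_left in HDz]; nra.
Qed.

Lemma kac_identity_interval lo hi : lo <= hi -> kac_identity f lo hi.
Proof.
intros Hlh.
destruct (Derive_sign_near_root lo hi Hlh) as [d [Hd Hnear]].
apply (interval_subdivision_ind (kac_identity f) lo hi d); auto.
- intros a b c Hab Hbc; apply kac_identity_Chasles; lra.
- intros a b Hab Hb Hba; apply kac_identity_local; [lra |].
  intros z x Hz Hx Hfz; apply Hnear; try lra.
  apply Rabs_le_between; lra.
Qed.

End KacRice.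

Theorem proposition1 (f : R -> R) :
  periodic_2pi f -> C2 f -> nondegenerate f ->
  exists n : nat, zero_count_is f n /\
    INR n = - (1 / 2) * RInt (kac_integrand f) 0 (2 * PI).
Proof.
intros Hper [Hf [HDf HDDf]] Hnd.
assert (HPI := PI_RGT_0).
destruct (kac_identity_interval f Hf HDf HDDf Hnd 0 (2 * PI)) as [l [[Hnodup Hin] Hint]];
  [lra |].
rewrite signed_slope_periodic in Hint by auto.
exists (length l); split.
- exists l; auto.
- rewrite (is_RInt_unique _ _ _ _ Hint); field.
Qed.
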